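(* Let $N$ be even, $p=N/2$, and consider the $(N,p)$-projective code, whose qubits are the projective $p$-faces. Let $\mathcal{E}$ be an error (set of qubits) of weight $|\mathcal{E}|\le N/64$. Then the number of checks indexed by projective $(p+1)$-faces that act on at least one qubit of $\mathcal{E}$ is at least $|\mathcal{E}|\cdot(N/2)\cdot(15/16)$, and the number of checks indexed by projective $(p-1)$-faces that act on at least one qubit of $\mathcal{E}$ is at least $|\mathcal{E}|\cdot N\cdot(15/16)$.
   Context: A $r$-face of the $N$-cube is a word in $\{0,1,*\}^N$ with exactly $r$ symbols $*$. The projective cube identifies a face $x$ with $x+\mathbf{1}$ (complementing every non-$*$ entry, with the convention $*+0=*+1=*$); a projective $r$-face is such an equivalence class. The upper shadow of a face replaces one non-$*$ entry by $*$; the lower shadow replaces one $*$ by $0$ or $1$; these are extended to projective faces by taking equivalence classes. The $(N,p)$-projective code is the CSS code whose qubits are the projective $p$-faces, with one family of checks indexed by projective $(p+1)$-faces $f$ (each acting on the $p$-faces in the lower shadow of $f$) and the other family indexed by projective $(p-1)$-faces $g$ (each acting on the $p$-faces in the upper shadow of $g$). *)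

From mathcomp Require Import all_boot all_order all_algebra.
Set Implicit Arguments. Unset Strict Implicit. Unset Printing Implicit Defensive.

(* A face of the N-cube: a word in {0,1,*}^N, encoded with
   Some false = 0, Some true = 1, None = *. *)
Definition face (N : nat) := {ffun 'I_N -> option bool}.

Definition nstars N (x : face N) : nat := #|[set i | x i == None]|.

Definition fcomp N (x : face N) : face N :=
  [ffun i => omap negb (x i)].

Definition pclass N (x : face N) : {set face N} := [set x; fcomp x].

Definition projfaces N (r : nat) : {set {set face N}} :=
  [set pclass x | x in [set x : face N | nstars x == r]].

Definition lshadow N (x : face N) : {set face N} :=
  [set y : face N | [exists i, [&& x i == None, y i != None &
             [forall j, (j != i) ==> (y j == x j)]]]].

Definition ushadow N (x : face N) : {set face N} :=
  [set y : face N | [exists i, [&& x i != None, y i == None &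
             [forall j, (j != i) ==> (y j == x j)]]]].

Definition plshadow N (F : {set face N}) : {set {set face N}} :=
  [set pclass y | y in \bigcup_(x in F) lshadow x].
Definition pushadow N (F : {set face N}) : {set {set face N}} :=
  [set pclass y | y in \bigcup_(x in F) ushadow x].

(* Z-checks: indexed by projective (p+1)-faces f, acting on plshadow f;
   those acting on at least one qubit of E *)
Definition hit_checks_up N p (E : {set {set face N}}) : {set {set face N}} :=
  [set f in projfaces N p.+1 | [exists q in E, q \in plshadow f]].
(* X-checks: indexed by projective (p-1)-faces g, acting on pushadow g *)
Definition hit_checks_down N p (E : {set {set face N}}) : {set {set face N}} :=
  [set g in projfaces N p.-1 | [exists q in E, q \in pushadow g]].

(* A projective p-face is the class of a face x with p stars and N - p non-star
   entries. The Z-checks meeting it are the classes of the N - p faces obtained by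
   starring one entry of x, the X-checks the classes of the 2p faces obtained by
   filling one star; each such face is at Hamming distance 1 from x. Distinct faces
   have at most one common upper (resp. lower) neighbour, so two distinct qubits
   [pclass x] and [pclass z] could only share two checks if one were reached through
   z and the other through its complement; that would put z within distance 4 of its
   complement, from which it differs in all N - p >= 5 non-star entries. Hence
   qubits share at most one check, inclusion-exclusion loses at most |E|^2 checks
   from |E| times the degree, and |E| <= N/64 keeps this loss below 1/32 of the total. *)

From mathcomp Require Import all_boot all_order all_algebra.
From mathcomp Require Import zify lra.
Import GRing.Theory Num.Theory.
Set Implicit Arguments. Unset Strict Implicit. Unset Printing Implicit Defensive.

Lemma card_setI_bigcup_le (T U : finType) (S : {set U}) (A : T -> {set U}) (E : {set T}) :
  #|S :&: \bigcup_(q in E) A q| <= \sum_(q in E) #|S :&: A q|.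
Proof.
apply: (big_rec2 (fun X n => #|S :&: X| <= n)); first by rewrite setI0 cards0.
move=> q X n _ le_Xn; rewrite setIUr.
by apply: leq_trans (leq_card_setU _ _) _; rewrite leq_add2l.
Qed.

Lemma card_bigcup_ge (T U : finType) (A : T -> {set U}) (E : {set T}) :
  {in E &, forall q q', q != q' -> #|A q :&: A q'| <= 1} ->
  \sum_(q in E) #|A q| <= #|\bigcup_(q in E) A q| + #|E| ^ 2.
Proof.
move: {2}#|E| (erefl #|E|) => n; elim: n E => [|n IH] E cardE meetE.
  by rewrite (cards0_eq cardE) big_set0.
have [q qE] : {q | q \in E} by apply/sigW/set0Pn; rewrite -card_gt0 cardE.
have cardE' : #|E :\ q| = n by move: cardE; rewrite (cardsD1 q E) qE; case.
have meetE' : {in E :\ q &, forall q1 q2, q1 != q2 -> #|A q1 :&: A q2| <= 1}.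
  by move=> q1 q2 /setD1P[_ ?] /setD1P[_ ?]; apply: meetE.
have := IH _ cardE' meetE'; rewrite (big_setD1 q qE) (big_setD1 q qE) /=.
set X := \bigcup_(q' in E :\ q) A q' => IHE.
have meet_qX : #|A q :&: X| <= n.
  apply: leq_trans (card_setI_bigcup_le _ _ _) _; rewrite -cardE' -sum1_card.
  by apply: leq_sum => q' /setD1P[q'q q'E]; apply: meetE; rewrite // eq_sym.
have := cardsUI (A q) X; rewrite cardE; nia.
Qed.

Section Faces.
Variable N : nat.
Implicit Types (x y z : face N) (i : 'I_N).

Definition stars x := [set i | x i == None].
Definition nonstar x := ~: stars x.

Lemma card_nonstar x : #|nonstar x| = N - nstars x.
Proof. by rewrite /nonstar cardsCs setCK card_ord. Qed.

Definition fupd x i o : face N := [ffun k => if k == i then o else x k].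

Lemma fcompK : involutive (@fcomp N).
Proof. by move=> x; apply/ffunP => i; rewrite !ffunE; case: (x i) => // -[]. Qed.

Lemma fcomp_fupd x i o : fcomp (fupd x i o) = fupd (fcomp x) i (omap negb o).
Proof. by apply/ffunP => k; rewrite !ffunE; case: eqP. Qed.

Lemma pclass_fcomp x : pclass (fcomp x) = pclass x.
Proof. by rewrite /pclass fcompK setUC. Qed.

Lemma pclass_eqE x y : (pclass y == pclass x) = (y \in pclass x).
Proof.
apply/eqP/idP => [<-|]; first by rewrite !inE eqxx.
by rewrite !inE => /orP[]/eqP->; rewrite ?pclass_fcomp.
Qed.

Lemma mem_imset_pclass (S : {set face N}) x :
  (pclass x \in [set pclass y | y in S]) = (x \in S) || (fcomp x \in S).
Proof.
apply/imsetP/orP => [[y yS /eqP]|[xS|xS]].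
- by rewrite eq_sym pclass_eqE !inE => /orP[]/eqP<-; auto.
- by exists x.
- by exists (fcomp x); rewrite ?pclass_fcomp.
Qed.

Lemma projfacesP r q :
  reflect (exists2 x, nstars x = r & q = pclass x) (q \in projfaces N r).
Proof.
apply: (iffP imsetP) => [[x]|[x xr ->]]; last by exists x; rewrite ?inE ?xr.
by rewrite inE => /eqP; exists x.
Qed.

Lemma ushadowP x y :
  reflect (exists2 i, x i != None & y = fupd x i None) (y \in ushadow x).
Proof.
rewrite inE; apply: (iffP existsP) => [[i /and3P[xi yi /forallP yx]]|[i xi ->]].
  exists i => //; apply/ffunP => k; rewrite ffunE.
  by case: eqVneq => [->|ki]; apply/eqP; rewrite ?(implyP (yx k)).
exists i; rewrite xi !ffunE eqxx /=.
by apply/forallP => k; apply/implyP => ki; rewrite ffunE (negbTE ki).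
Qed.

Lemma lshadowP x y :
  reflect (exists i b, x i = None /\ y = fupd x i (Some b)) (y \in lshadow x).
Proof.
rewrite inE; apply: (iffP existsP) => [[i /and3P[/eqP xi yi /forallP yx]]|[i [b [xi ->]]]].
  move: yi; case yiE: (y i) => [b|] // _; exists i, b; split => //.
  apply/ffunP => k; rewrite ffunE.
  by case: eqVneq => [->|ki] //; apply/eqP; rewrite (implyP (yx k)).
exists i; rewrite xi !ffunE eqxx /=.
by apply/forallP => k; apply/implyP => ki; rewrite ffunE (negbTE ki).
Qed.

Lemma mem_lshadow x y : (y \in lshadow x) = (x \in ushadow y).
Proof.
apply/lshadowP/ushadowP => [[i [b [xi ->]]]|[i yi ->]].
  exists i; first by rewrite ffunE eqxx.
  by apply/ffunP => k; rewrite !ffunE; case: eqP => // ->.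
move: yi; case yiE: (y i) => [b|] // _; exists i, b; rewrite ffunE eqxx; split => //.
by apply/ffunP => k; rewrite !ffunE; case: eqP => // ->.
Qed.

Lemma ushadow_fcomp x y : (fcomp y \in ushadow (fcomp x)) = (y \in ushadow x).
Proof.
suff sub x' y' : y' \in ushadow x' -> fcomp y' \in ushadow (fcomp x').
  by apply/idP/idP => [/sub|/sub //]; rewrite !fcompK.
case/ushadowP=> i xi ->; apply/ushadowP; exists i; last by rewrite fcomp_fupd.
by rewrite ffunE; case: (x' i) xi.
Qed.

Lemma lshadow_fcomp x y : (fcomp y \in lshadow (fcomp x)) = (y \in lshadow x).
Proof. by rewrite !mem_lshadow ushadow_fcomp. Qed.

Lemma nstars_ushadow x y : y \in ushadow x -> nstars y = (nstars x).+1.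
Proof.
case/ushadowP=> i xi ->; change (#|stars (fupd x i None)| = #|stars x|.+1).
have -> : stars (fupd x i None) = i |: stars x.
  by apply/setP => k; rewrite !inE ffunE; case: (k == i).
by rewrite cardsU1 inE xi.
Qed.

Definition hamming x y := #|[set i | x i != y i]|.

Lemma hammingC x y : hamming x y = hamming y x.
Proof. by apply: eq_card => i; rewrite !inE eq_sym. Qed.

Lemma hamming_triangle x y z : hamming x z <= hamming x y + hamming y z.
Proof.
apply: leq_trans (leq_card_setU _ _); apply/subset_leq_card/subsetP => i.
by rewrite !inE; case: (x i =P y i) => //= ->.
Qed.

Lemma hamming_fcomp x y : hamming (fcomp x) (fcomp y) = hamming x y.
Proof.
apply: eq_card => i; rewrite !inE !ffunE.
by case: (x i) (y i) => [[]|] [[]|].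
Qed.

Lemma hamming_fcompr x : hamming x (fcomp x) = #|nonstar x|.
Proof. by apply: eq_card => i; rewrite !inE ffunE; case: (x i) => [[]|]. Qed.

Lemma hamming_fupd x i o : hamming x (fupd x i o) <= 1.
Proof.
rewrite -(cards1 i); apply/subset_leq_card/subsetP => k.
by rewrite !inE ffunE; case: (k =P i) => // _; rewrite eqxx.
Qed.

Lemma hamming_ushadow x y : y \in ushadow x -> hamming x y <= 1.
Proof. by case/ushadowP=> i _ ->; apply: hamming_fupd. Qed.

Lemma hamming_lshadow x y : y \in lshadow x -> hamming x y <= 1.
Proof. by rewrite mem_lshadow hammingC; apply: hamming_ushadow. Qed.

Lemma nstars_lshadow x y : y \in lshadow x -> nstars x = (nstars y).+1.
Proof. by rewrite mem_lshadow; apply: nstars_ushadow. Qed.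

Lemma card_ushadow x : #|ushadow x| = #|nonstar x|.
Proof.
have -> : ushadow x = [set fupd x i None | i in nonstar x].
  apply/setP => y; apply/ushadowP/imsetP => [[i xi ->]|[i]].
    by exists i; rewrite // !inE.
  by rewrite !inE => xi ->; exists i.
apply: card_in_imset => i j _; rewrite !inE => xj /ffunP/(_ j); rewrite !ffunE eqxx.
by case: eqVneq => [-> //|_ xjN]; rewrite xjN in xj.
Qed.

Lemma card_lshadow x : #|lshadow x| = (nstars x).*2.
Proof.
have -> : lshadow x = [set fupd x ib.1 (Some ib.2) | ib in setX (stars x) setT].
  apply/setP => y; apply/lshadowP/imsetP => [[i [b [xi ->]]]|[[i b]]].
    by exists (i, b); rewrite // !inE xi.
  by rewrite !inE andbT => /eqP xi ->; exists i, b.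
rewrite card_in_imset ?cardsX ?cardsT ?card_bool ?muln2 //.
move=> [i b] [j c]; rewrite !inE andbT /= => /eqP xi _ /ffunP/(_ i).
by rewrite !ffunE eqxx; case: eqVneq => [<- [->] //|_]; rewrite xi.
Qed.

Lemma card_ushadowI_le1 x z : x != z -> #|ushadow x :&: ushadow z| <= 1.
Proof.
move=> xz; suff meet y : y \in ushadow x -> y \in ushadow z ->
    y = [ffun k => if x k == z k then x k else None].
  by apply/card_le1_eqP => y1 y2 /setIP[/meet y1E /y1E ->] /setIP[/meet y2E /y2E ->].
case/ushadowP=> i xi -> /ushadowP[j zj /ffunP yE]; apply/ffunP => k.
have yEk := yE k; rewrite !ffunE in yEk *.
case: eqVneq yEk => [ki|ki]; case: eqVneq => [kj|kj]; subst => //.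
- case: eqVneq => // xzj _; case/eqP: xz; apply/ffunP => k.
  by have := yE k; rewrite !ffunE; case: eqVneq => [->|].
- by move=> <-; case: eqP => [->|].
- by move=> ->; case: ifP.
- by move=> ->; rewrite eqxx.
Qed.

Lemma card_lshadowI_le1 x z : x != z -> #|lshadow x :&: lshadow z| <= 1.
Proof.
move=> xz; suff meet y : y \in lshadow x -> y \in lshadow z ->
    y = [ffun k => if x k == None then z k else x k].
  by apply/card_le1_eqP => y1 y2 /setIP[/meet y1E /y1E ->] /setIP[/meet y2E /y2E ->].
case/lshadowP=> i [b [xi ->]] /lshadowP[j [c [zj /ffunP yE]]]; apply/ffunP => k.
have yEk := yE k; rewrite !ffunE in yEk *.
case: eqVneq yEk => [ki|ki]; case: eqVneq => [kj|kj]; subst => //.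
- move=> _; case/eqP: xz; apply/ffunP => k.
  by have := yE k; rewrite !ffunE; case: eqVneq => [->|]; rewrite ?xi ?zj.
- by move=> ->; rewrite xi eqxx.
- by move=> ->.
- by move=> ->; case: ifP.
Qed.

End Faces.

Section ProjectiveShadow.
Variables (N : nat) (sh : face N -> {set face N}).
Implicit Types x y z : face N.
Hypothesis sh_fcomp : forall x y, (fcomp y \in sh (fcomp x)) = (y \in sh x).
Hypothesis hamming_sh : forall x y, y \in sh x -> hamming x y <= 1.
Hypothesis card_shI_le1 : forall x z, x != z -> #|sh x :&: sh z| <= 1.

Let psh x := [set pclass y | y in sh x].

Lemma pshadow_pclass x : [set pclass y | y in \bigcup_(v in pclass x) sh v] = psh x.
Proof.
apply/setP => f; apply/imsetP/imsetP => [[y /bigcupP[v] vx yv ->]|[y yx ->]].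
  move: vx; rewrite !inE => /orP[]/eqP vE; first by exists y; rewrite -?vE.
  by exists (fcomp y); rewrite ?pclass_fcomp // -sh_fcomp fcompK -vE.
by exists y => //; apply/bigcupP; exists x; rewrite // !inE eqxx.
Qed.

Lemma card_pshadow x : 2 < #|nonstar x| -> #|psh x| = #|sh x|.
Proof.
move=> x_gt2; apply: card_in_imset => y1 y2 y1x y2x /eqP.
rewrite pclass_eqE !inE => /orP[/eqP // | /eqP y1E]; exfalso.
have := hamming_triangle x y1 (fcomp x).
rewrite hamming_fcompr {2}y1E hamming_fcomp [hamming y2 x]hammingC.
by have := hamming_sh y1x; have := hamming_sh y2x; lia.
Qed.

Lemma card_pshadowI_le1 x z :
  pclass x != pclass z -> 4 < #|nonstar z| -> #|psh x :&: psh z| <= 1.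
Proof.
move=> xz z_gt4.
have common f : f \in psh x :&: psh z ->
    exists2 y, y \in sh x & f = pclass y /\ (y \in sh z \/ y \in sh (fcomp z)).
  case/setIP=> /imsetP[y yx ->] /imsetP[y' y'z /eqP yy']; exists y => //; split => //.
  move: yy'; rewrite pclass_eqE !inE => /orP[]/eqP->; first by left.
  by right; rewrite sh_fcomp.
have far a b y1 y2 : y1 \in sh x -> y1 \in sh a -> y2 \in sh x -> y2 \in sh b ->
    hamming a b <= 4.
  move=> y1x y1a y2x y2b.
  have := hamming_triangle a y1 b; have := hamming_triangle y1 x b.
  have := hamming_triangle x y2 b; rewrite [hamming y1 x]hammingC [hamming y2 b]hammingC.
  by have := hamming_sh y1x; have := hamming_sh y1a; have := hamming_sh y2x;
    have := hamming_sh y2b; lia.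
have x_neq w : w \in pclass z -> x != w.
  by move=> wz; apply: contraNneq xz => ->; rewrite pclass_eqE.
have zfz : 4 < hamming z (fcomp z) by rewrite hamming_fcompr.
apply/card_le1_eqP => f1 f2 /common[y1 y1x [-> y1z]] /common[y2 y2x [-> y2z]].
case: y1z y2z => [y1z|y1z] [y2z|y2z].
- have /card_le1_eqP meet := card_shI_le1 (x_neq _ (set21 z (fcomp z))).
  by congr pclass; apply: meet; apply/setIP.
- by have := far _ _ _ _ y1x y1z y2x y2z; lia.
- by have := far _ _ _ _ y1x y1z y2x y2z; rewrite hammingC; lia.
- have /card_le1_eqP meet := card_shI_le1 (x_neq _ (set22 z (fcomp z))).
  by congr pclass; apply: meet; apply/setIP.
Qed.

End ProjectiveShadow.

Lemma pushadow_pclass N (x : face N) :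
  pushadow (pclass x) = [set pclass y | y in ushadow x].
Proof. exact: pshadow_pclass (@ushadow_fcomp N) x. Qed.

Lemma plshadow_pclass N (x : face N) :
  plshadow (pclass x) = [set pclass y | y in lshadow x].
Proof. exact: pshadow_pclass (@lshadow_fcomp N) x. Qed.

Lemma mem_plshadow N (x w : face N) :
  (pclass x \in plshadow (pclass w)) = (pclass w \in pushadow (pclass x)).
Proof.
rewrite plshadow_pclass pushadow_pclass !mem_imset_pclass !mem_lshadow.
by rewrite -(ushadow_fcomp x (fcomp w)) fcompK.
Qed.

Lemma hit_checks_upE N p (E : {set {set face N}}) : E \subset projfaces N p ->
  hit_checks_up p E = \bigcup_(q in E) pushadow q.
Proof.
move=> sE; apply/setP => f; rewrite inE; apply/andP/bigcupP.
  case=> /projfacesP[w _ ->] /exists_inP[q qE qw]; exists q => //.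
  by have /projfacesP[x _ qx] := subsetP sE q qE; rewrite qx -mem_plshadow -qx.
case=> q qE; have /projfacesP[x xp qx] := subsetP sE q qE; subst q.
rewrite pushadow_pclass => /imsetP[y yx ->]; split.
  by apply/projfacesP; exists y; rewrite ?(nstars_ushadow yx) ?xp.
by apply/exists_inP; exists (pclass x); rewrite // mem_plshadow pushadow_pclass imset_f.
Qed.

Lemma hit_checks_downE N p (E : {set {set face N}}) : E \subset projfaces N p ->
  hit_checks_down p E = \bigcup_(q in E) plshadow q.
Proof.
move=> sE; apply/setP => g; rewrite inE; apply/andP/bigcupP.
  case=> /projfacesP[w _ ->] /exists_inP[q qE qw]; exists q => //.
  by have /projfacesP[x _ qx] := subsetP sE q qE; rewrite qx mem_plshadow -qx.
case=> q qE; have /projfacesP[x xp qx] := subsetP sE q qE; subst q.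
rewrite plshadow_pclass => /imsetP[y yx ->]; split.
  by apply/projfacesP; exists y; rewrite // -xp (nstars_lshadow yx).
by apply/exists_inP; exists (pclass x); rewrite // -mem_plshadow plshadow_pclass imset_f.
Qed.

Lemma card_pushadow N (x : face N) :
  2 < #|nonstar x| -> #|pushadow (pclass x)| = #|nonstar x|.
Proof.
by move=> x_gt2; rewrite pushadow_pclass (card_pshadow (@hamming_ushadow N)) ?card_ushadow.
Qed.

Lemma card_plshadow N (x : face N) :
  2 < #|nonstar x| -> #|plshadow (pclass x)| = (nstars x).*2.
Proof.
by move=> x_gt2; rewrite plshadow_pclass (card_pshadow (@hamming_lshadow N)) ?card_lshadow.
Qed.

Lemma card_pushadowI_le1 N (x z : face N) : pclass x != pclass z -> 4 < #|nonstar z| ->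
  #|pushadow (pclass x) :&: pushadow (pclass z)| <= 1.
Proof.
rewrite !pushadow_pclass; apply: card_pshadowI_le1.
- exact: ushadow_fcomp.
- exact: hamming_ushadow.
- exact: card_ushadowI_le1.
Qed.

Lemma card_plshadowI_le1 N (x z : face N) : pclass x != pclass z -> 4 < #|nonstar z| ->
  #|plshadow (pclass x) :&: plshadow (pclass z)| <= 1.
Proof.
rewrite !plshadow_pclass; apply: card_pshadowI_le1.
- exact: lshadow_fcomp.
- exact: hamming_lshadow.
- exact: card_lshadowI_le1.
Qed.

Lemma card_hit_checks_up N p (E : {set {set face N}}) :
  E \subset projfaces N p -> 4 < N - p ->
  #|E| * (N - p) <= #|hit_checks_up p E| + #|E| ^ 2.
Proof.
move=> sE N_p; rewrite hit_checks_upE //.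
have deg q : q \in E -> N - p <= #|pushadow q|.
  by case/(subsetP sE)/projfacesP=> x xp ->; rewrite card_pushadow card_nonstar xp //; lia.
have meet : {in E &, forall q q', q != q' -> #|pushadow q :&: pushadow q'| <= 1}.
  move=> q q' /(subsetP sE)/projfacesP[x _ ->] /(subsetP sE)/projfacesP[x' x'p ->] xx'.
  by rewrite card_pushadowI_le1 // card_nonstar x'p.
by apply: leq_trans (card_bigcup_ge meet); rewrite -sum_nat_const; apply: leq_sum.
Qed.

Lemma card_hit_checks_down N p (E : {set {set face N}}) :
  E \subset projfaces N p -> 4 < N - p ->
  #|E| * p.*2 <= #|hit_checks_down p E| + #|E| ^ 2.
Proof.
move=> sE N_p; rewrite hit_checks_downE //.
have deg q : q \in E -> p.*2 <= #|plshadow q|.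
  by case/(subsetP sE)/projfacesP=> x xp ->; rewrite card_plshadow ?xp // card_nonstar; lia.
have meet : {in E &, forall q q', q != q' -> #|plshadow q :&: plshadow q'| <= 1}.
  move=> q q' /(subsetP sE)/projfacesP[x _ ->] /(subsetP sE)/projfacesP[x' x'p ->] xx'.
  by rewrite card_plshadowI_le1 // card_nonstar x'p.
by apply: leq_trans (card_bigcup_ge meet); rewrite -sum_nat_const; apply: leq_sum.
Qed.

Unset Implicit Arguments.
Local Open Scope ring_scope.

Theorem mainTheorem4 (N : nat) (E : {set {set face N}}) :
  ~~ odd N ->
  E \subset projfaces N N./2 ->
  (#|E|%:R : rat) <= N%:R / 64 ->
  (#|hit_checks_up N./2 E|%:R : rat) >= #|E|%:R * (N%:R / 2) * (15 / 16) /\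
  (#|hit_checks_down N./2 E|%:R : rat) >= #|E|%:R * N%:R * (15 / 16).
Proof.
move=> evenN sE small; set p := N./2 in sE *.
have N_2p : N = p.*2 by rewrite -[N in LHS]odd_double_half (negbTE evenN).
have E_small : (#|E| * 32 <= p)%N.
  by move: small; rewrite ler_pdivlMr // -natrM ler_nat; lia.
have [E0 | E_gt0] := posnP #|E|.
  by rewrite E0 !mul0r; split; apply: ler0n.
have N_p : (4 < N - p)%N by lia.
have up := card_hit_checks_up sE N_p; have down := card_hit_checks_down sE N_p.
have sq : (#|E| ^ 2 * 32 <= #|E| * p)%N by rewrite -mulnn -mulnA leq_mul2l E_small orbT.
rewrite (_ : (N - p = p)%N) in up; last by lia.
have EN : (#|E| * N = #|E| * p + #|E| * p)%N by rewrite -mulnDr addnn -N_2p.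
split.
  have : (#|E| * N * 15 <= #|hit_checks_up p E| * 32)%N by lia.
  by rewrite -(ler_nat rat) !natrM; lra.
have : (#|E| * N * 15 <= #|hit_checks_down p E| * 16)%N by lia.
by rewrite -(ler_nat rat) !natrM; lra.
Qed.
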